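(* For every composition $\alpha$ and all $a,b\in\mathbb C$, $\omega(\widehat{\mathcal B}(a,b)_\alpha)=\widehat{\mathcal B}(-a,a+b)_{\alpha^r}$.
   Context: $\mathsf{NSym}$ is the algebra of noncommutative symmetric functions over $\mathbb C$ with basis $H_\alpha=H_{\alpha_1}\cdots H_{\alpha_l}$; $\Lambda_n=\sum_{\beta}(-1)^{n-\ell(\beta)}H_\beta$ (sum over compositions $\beta$ of $n$) and $\Lambda_\alpha=\Lambda_{\alpha_1}\cdots\Lambda_{\alpha_l}$. $\omega:\mathsf{NSym}\to\mathsf{NSym}$ is the involutive algebra anti-automorphism with $\omega(H_\alpha)=\Lambda_{\alpha^r}$, where $\alpha^r=(\alpha_l,\dots,\alpha_1)$. For a composition $\alpha$ of $n$, $\mathrm{set}(\alpha)=\{\alpha_1,\alpha_1+\alpha_2,\dots,\alpha_1+\dots+\alpha_{l-1}\}$, $\ell(\alpha)=l$, and $\beta\preceq\alpha$ means $\mathrm{set}(\alpha)\subseteq\mathrm{set}(\beta)$. Define $\widehat{\mathcal B}(a,b)_\alpha=\sum_{\beta\preceq\alpha}a^{n-\ell(\beta)}b^{\ell(\beta)-\ell(\alpha)}H_\beta$ (convention $0^0=1$), and $\widehat{\mathcal B}(a,b)$ of the empty composition is $1$. *)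

From HB Require Import structures.
From mathcomp Require Import all_boot all_order all_algebra.
From mathcomp Require Import complex.
From mathcomp Require Import reals.
Set Implicit Arguments. Unset Strict Implicit. Unset Printing Implicit Defensive.
Import Order.TTheory GRing.Theory Num.Theory.
Local Open Scope ring_scope.

Definition is_comp (n : nat) (c : seq nat) : bool :=
  all (fun k => (0 < k)%N) c && (sumn c == n).

Fixpoint seqs_len (l n : nat) : seq (seq nat) :=
  match l with
  | 0 => [:: [::]]
  | l'.+1 => [seq x :: s | x <- iota 1 n, s <- seqs_len l' n]
  end.

Definition comps (n : nat) : seq (seq nat) :=
  [seq c <- flatten [seq seqs_len l n | l <- iota 0 n.+1] | is_comp n c].

Definition setc (al : seq nat) : seq nat :=
  [seq sumn (take i al) | i <- iota 1 (size al).-1].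

(* beta ⪯ alpha  iff  set(alpha) ⊆ set(beta) *)
Definition refines (be al : seq nat) : bool :=
  all (fun s => s \in setc be) (setc al).

(* An element of NSym is represented by a finite formal sum  sum_i c_i H_{beta_i},
   i.e. a list of pairs (c_i, beta_i); two representations denote the same
   element iff they have the same coefficient on every basis element H_beta. *)
Section NSym.
Variable C : comNzRingType.

Definition nsym := seq (C * seq nat).

Definition nsym_coef (x : nsym) (be : seq nat) : C :=
  \sum_(p <- x | p.2 == be) p.1.

Definition nsym_eq (x y : nsym) : Prop := forall be, nsym_coef x be = nsym_coef y be.

Definition nsym_one : nsym := [:: (1, [::])].
Definition nsym_H (al : seq nat) : nsym := [:: (1, al)].
Definition nsym_scale (c : C) (x : nsym) : nsym := [seq (c * p.1, p.2) | p <- x].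
Definition nsym_mul (x y : nsym) : nsym :=
  [seq (p.1 * q.1, p.2 ++ q.2) | p <- x, q <- y].

Definition Lam (n : nat) : nsym :=
  [seq ((-1) ^+ (n - size be), be) | be <- comps n].

Definition LamC (al : seq nat) : nsym := foldr nsym_mul nsym_one [seq Lam k | k <- al].

(* omega: the linear (anti-)automorphism with omega(H_alpha) = Lambda_{alpha^r},
   extended C-linearly *)
Definition omega (x : nsym) : nsym :=
  flatten [seq nsym_scale p.1 (LamC (rev p.2)) | p <- x].

(* \hat B(a,b)_alpha = sum_{beta ⪯ alpha} a^{n - l(beta)} b^{l(beta) - l(alpha)} H_beta,
   n = |alpha|; for alpha empty this is 1 = H_{[::]} (with 0^0 = 1). *)
Definition Bhat (a b : C) (al : seq nat) : nsym :=
  [seq (a ^+ (sumn al - size be) * b ^+ (size be - size al), be)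
  | be <- comps (sumn al) & refines be al].

End NSym.

(* Compare coefficients of H_gamma, with n = |alpha|.  As omega(H_beta) = Lambda_{beta^r}
   and Lambda_delta is the signed sum of the H_gamma with gamma finer than delta, the
   coefficient of H_gamma in omega(Bhat(a,b)_alpha) is (-1)^(n - l(gamma)) times the sum of
   a^(n - l(beta)) b^(l(beta) - l(alpha)) over the refinement interval gamma^r <= beta <= alpha.
   Each of the l(gamma) - l(alpha) cuts of gamma^r that is not a cut of alpha is either
   dropped by beta (weight a) or kept (weight b), so this sum is
   a^(n - l(gamma)) (a + b)^(l(gamma) - l(alpha)); the sign turns a into -a, and
   gamma^r <= alpha iff gamma <= alpha^r. *)

From HB Require Import structures.
From mathcomp Require Import all_boot all_order all_algebra.
From mathcomp Require Import complex reals.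
From mathcomp Require Import zify ring.
Set Implicit Arguments. Unset Strict Implicit. Unset Printing Implicit Defensive.

Local Notation all_pos s := (all (fun k => 0 < k) s).

Lemma size_le_sumn s : all_pos s -> size s <= sumn s.
Proof. by elim: s => //= x s IH /andP[x0 /IH]; lia. Qed.

Lemma sumn_take_le i s : sumn (take i s) <= sumn s.
Proof. by rewrite -{2}(cat_take_drop i s) sumn_cat leq_addr. Qed.

Lemma setc_cons x s :
  setc (x :: s) = if s is [::] then [::] else x :: map (addn x) (setc s).
Proof.
case: s => // y s; rewrite /setc /= addn0; congr (_ :: _).
by rewrite -map_comp -(addn1 1) iotaDl -map_comp.
Qed.

Arguments setc : simpl never.

Lemma mem_setc_cons x s (t : nat) :
  (t \in setc (x :: s)) = (s != [::]) && (t == x) || (x < t) && (t - x \in setc s).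
Proof.
rewrite setc_cons; case: s => [|y s]; first by rewrite andbF.
rewrite /= in_cons; case: (t =P x) => [-> | ne] //=.
apply/mapP/andP => [[u us e] | [xt ts]].
  by subst t; rewrite addKn us; split => //; lia.
by exists (t - x); [done | lia].
Qed.

Lemma setc_gt0 s t : all_pos s -> t \in setc s -> 0 < t.
Proof.
elim: s t => [|x s IH] t //= /andP[x0 ps]; rewrite mem_setc_cons.
by case/orP => [/andP[_ /eqP ->] | /andP[xt _]] //; lia.
Qed.

Lemma setc_le_sumn s t : t \in setc s -> t <= sumn s.
Proof. by case/mapP => i _ ->; apply: sumn_take_le. Qed.

Lemma mem_setc_rev s t : (t \in setc (rev s)) = (t \in map (subn (sumn s)) (setc s)).
Proof.
have sumn_drop j : sumn (drop j s) = sumn s - sumn (take j s).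
  by rewrite -{2}(cat_take_drop j s) sumn_cat addKn.
rewrite /setc size_rev; apply/mapP/mapP => [[i ii ->] | [u /mapP[i ii ->] ->]].
- move: ii; rewrite mem_iota => ii; exists (sumn (take (size s - i) s)).
    by apply: map_f; rewrite mem_iota; case: (size s) ii => //= n; lia.
  by rewrite take_rev sumn_rev sumn_drop.
- move: ii; rewrite mem_iota => ii; exists (size s - i).
    by rewrite mem_iota; case: (size s) ii => //= n; lia.
  rewrite take_rev sumn_rev sumn_drop; congr (_ - sumn (take _ _)).
  by case: (size s) ii => //= n; lia.
Qed.

Lemma refines_trans g b c : refines g b -> refines b c -> refines g c.
Proof. by move=> /allP gb /allP bc; apply/allP => t /bc /gb. Qed.

Lemma refines_rev g b : sumn g = sumn b -> refines (rev g) (rev b) = refines g b.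
Proof.
move=> sgb; set n := sumn b.
have mem_sub (S : seq nat) (u : nat) : u <= n -> {in S, forall v, v <= n} ->
    (n - u \in map (subn n) S) = (u \in S).
  move=> un Sn; apply/mapP/idP => [[v vS e] | uS]; last by exists u.
  by rewrite (_ : u = v) //; have := Sn v vS; lia.
rewrite /refines (eq_all_r (mem_setc_rev b)) all_map; apply: eq_in_all => t tb /=.
rewrite mem_setc_rev sgb mem_sub //; first exact: setc_le_sumn.
by rewrite /n -sgb => v /setc_le_sumn.
Qed.

Lemma refines_cons x g k b : all_pos g -> all_pos b -> x + sumn g = k + sumn b ->
  refines (x :: g) (k :: b) =
  if x == k then refines g b else (x < k) && refines g ((k - x) :: b).
Proof.
move=> pg pb sxk; rewrite /refines.
case: b pb sxk => [|y b] pb sxk.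
  by case: eqP => [// | xk] /=; rewrite andbT; symmetry; apply/idP; move: sxk => /=; lia.
rewrite [setc (k :: _)]setc_cons [setc (k - x :: _)]setc_cons /= mem_setc_cons.
rewrite !(all_map (addn _)); case: ltngtP => xk /=.
- rewrite andbF /=; congr (_ && _); apply: eq_in_all => t /(setc_gt0 pb) t0 /=.
  rewrite mem_setc_cons; have [-> ->] : (k + t == x) = false /\ x < k + t by split; lia.
  by rewrite andbF /= addnBAC // ltnW.
- by rewrite andbF.
- have -> : g != [::] by case: g sxk {pg} => //=; case/andP: pb; lia.
  subst k; apply: eq_in_all => t /(setc_gt0 pb) t0 /=.
  rewrite mem_setc_cons; have [-> ->] : (x + t == x) = false /\ x < x + t by split; lia.
  by rewrite andbF addKn.
Qed.

Fixpoint finer (g b : seq nat) : bool :=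
  match g, b with
  | [::], [::] => true
  | x :: g', k :: b' =>
      (0 < x) && (if x == k then finer g' b' else (x < k) && finer g' ((k - x) :: b'))
  | _, _ => false
  end.

Lemma finer_cons x g k b : finer (x :: g) (k :: b) =
  (0 < x) && (if x == k then finer g b else (x < k) && finer g ((k - x) :: b)).
Proof. by []. Qed.

Lemma finers0 g : finer g [::] = (g == [::]).
Proof. by case: g. Qed.

Lemma finer0s b : finer [::] b = (b == [::]).
Proof. by case: b. Qed.

Lemma finerE g b :
  finer g b = [&& all_pos g, all_pos b, sumn g == sumn b & refines g b].
Proof.
elim: g b => [|x g IH] [|k b] //=.
- by case: k => //= k; rewrite andbF.
- by case: x => //= x; rewrite andbF.
rewrite -!andbA; case: (posnP x) => [-> // | x0] => /=.
case: ltngtP => xk; rewrite ?IH /=.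
- rewrite subn_gt0 xk (ltn_trans x0 xk) /=.
  have -> : (sumn g == k - x + sumn b) = (x + sumn g == k + sumn b) by apply/eqP/eqP; lia.
  case: (boolP (all_pos g)) => pg //=; case: (boolP (all_pos b)) => pb //=.
  by case: eqP => // sxk; rewrite refines_cons // (ltn_eqF xk) xk.
- case: (boolP (all_pos g)) => pg //=; case: (posnP k) => // k0.
  case: (boolP (all_pos b)) => pb //=; case: eqP => // sxk.
  by rewrite refines_cons // (gtn_eqF xk) ltnNge (ltnW xk).
- subst k; rewrite x0 eqn_add2l /=.
  case: (boolP (all_pos g)) => pg //=; case: (boolP (all_pos b)) => pb //=.
  by case: eqP => // sgb; rewrite refines_cons ?eqxx // sgb.
Qed.

Lemma finer_size g b : finer g b -> size b <= size g <= sumn b.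
Proof.
move=> gb; apply/andP; split; last first.
  by move: gb; rewrite finerE => /and4P[/size_le_sumn + _ /eqP <- _].
elim: g b gb => [|x g IH] [|k b] //= /andP[_].
by case: ifP => [_ /IH | _ /andP[_ /IH]] /=; lia.
Qed.

Lemma finer_trans g b c : finer g b -> finer b c -> finer g c.
Proof.
rewrite !finerE => /and4P[-> _ /eqP -> gb] /and4P[_ -> /eqP -> bc] /=.
by rewrite eqxx (refines_trans gb bc).
Qed.

Lemma finer_rev g b : finer (rev g) (rev b) = finer g b.
Proof.
by rewrite !finerE !all_rev !sumn_rev; case: eqP => //= /refines_rev ->.
Qed.

Arguments finer : simpl never.

Lemma finer_head_shift d j g k b : 0 < j -> d < k ->
  finer ((d + j) :: g) (k :: b) = finer (j :: g) ((k - d) :: b).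
Proof.
move=> j0 dk; rewrite !finer_cons j0 addn_gt0 j0 orbT /= subnDA.
have -> : (d + j == k) = (j == k - d) by apply/eqP/eqP; lia.
by have -> : (d + j < k) = (j < k - d) by apply/idP/idP; lia.
Qed.

Lemma size_seqs_len l n s : s \in seqs_len l n -> size s = l.
Proof.
elim: l s => [|l IH] s /=; first by rewrite inE => /eqP ->.
by case/allpairsP => -[y t] /= [_ /IH <- ->].
Qed.

Lemma mem_seqs_len l n s :
  size s = l -> all (fun y => 0 < y <= n) s -> s \in seqs_len l n.
Proof.
elim: l s => [|l IH] [|y s] //= [sz] /andP[yn sn].
by apply/allpairsP; exists (y, s); rewrite /= mem_iota IH //; split => //; lia.
Qed.

Lemma uniq_seqs_len l n : uniq (seqs_len l n).
Proof.
elim: l => //= l IH; apply: allpairs_uniq => //; first exact: iota_uniq.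
by move=> [x s] [y t] _ _ /= [-> ->].
Qed.

Lemma uniq_comps n : uniq (comps n).
Proof.
apply: filter_uniq; rewrite /comps.
suff /(_ 0 n.+1) : forall m k, uniq (flatten [seq seqs_len l n | l <- iota m k]) by [].
move=> m k; elim: k m => //= k IH m; rewrite cat_uniq uniq_seqs_len IH andbT.
apply/hasPn => s /flattenP[_ /mapP[l lm ->] /size_seqs_len sl].
by apply/negP => /size_seqs_len; move: lm; rewrite mem_iota; lia.
Qed.

Lemma mem_comps n s : (s \in comps n) = all_pos s && (sumn s == n).
Proof.
rewrite mem_filter /is_comp -andbA; case: (boolP (all_pos s)) => // ps.
case: eqP => // <-; apply/flattenP; exists (seqs_len (size s) (sumn s)).
  by apply: (map_f (seqs_len^~ _)); rewrite mem_iota ltnS size_le_sumn.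
apply: mem_seqs_len => //; apply/allP => y ys; rewrite (allP ps) //=.
by rewrite (perm_sumn (perm_to_rem ys)) /= leq_addr.
Qed.

Lemma mem_comps_refines b g :
  all_pos b -> (g \in comps (sumn b)) && refines g b = finer g b.
Proof. by move=> pb; rewrite mem_comps finerE pb -andbA. Qed.

Lemma perm_comps_head N : 0 < N ->
  perm_eq (comps N) [seq j :: be | j <- iota 1 N, be <- comps (N - j)].
Proof.
move=> N0; apply: uniq_perm; first exact: uniq_comps.
  apply: allpairs_uniq_dep => [|j _|]; rewrite ?iota_uniq ?uniq_comps //.
  by move=> [j be] [i ce] _ _ /= [eji ebc]; subst i; rewrite ebc.
move=> s; rewrite mem_comps; apply/idP/allpairsPdep => [|[j [be [+ + ->]]]].
  case: s => [|j be] /=; first by move=> /eqP n0; move: N0; rewrite -n0.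
  case/andP=> /andP[j0 pbe] /eqP sb; exists j, be; rewrite mem_iota mem_comps pbe /=.
  by split => //; apply/eqP; lia.
by rewrite mem_iota mem_comps /= => jN /andP[-> /eqP sb]; apply/andP; split; lia.
Qed.

Lemma big_comps_head (V : Type) (idx : V) (op : Monoid.com_law idx) N (F : seq nat -> V) :
  0 < N ->
  \big[op/idx]_(be <- comps N) F be =
  \big[op/idx]_(1 <= j < N.+1) \big[op/idx]_(be <- comps (N - j)) F (j :: be).
Proof.
move=> N0; rewrite (perm_big _ (perm_comps_head N0)) big_allpairs_dep.
by rewrite /index_iota subSS subn0.
Qed.

Import GRing.Theory.
Local Open Scope ring_scope.

(* A composition of [n] with first part at least [d] either starts with [d] or arises
   from a composition of [n - d] by adding [d] to its first part. *)
Lemma sum_comps_lead (V : nmodType) n d (F : seq nat -> V) :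
  (0 < d <= n)%N -> (forall j be, (j < d)%N -> F (j :: be) = 0) ->
  \sum_(be <- comps n) F be =
  \sum_(be <- comps (n - d)) (F (d :: be) + if be is j :: ce then F ((d + j)%N :: ce) else 0).
Proof.
move=> /andP[d0 dn] Fd; rewrite big_split [LHS]big_comps_head /=; last lia.
rewrite (@big_cat_nat _ _ _ d) //=; last lia.
have -> : \sum_(1 <= j < d) \sum_(be <- comps (n - j)) F (j :: be) = 0.
  by rewrite big_nat big1 // => j /andP[_ jd]; rewrite big1 // => be _; apply: Fd.
rewrite add0r big_ltn; last lia.
congr (_ + _); case: (posnP (n - d)) => [nd0 | nd].
  by rewrite nd0 big_geq ?big_seq1 //; lia.
rewrite (big_comps_head _ _ nd) -[d.+1]add1n big_addn.
have -> : (n.+1 - d = (n - d).+1)%N by lia.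
by apply: eq_big_nat => j _; rewrite addnC subnDA.
Qed.

Section Coefficients.
Variable C : comNzRingType.
Implicit Types (x y : nsym C) (ga : seq nat).

Lemma coef_flatten (xs : seq (nsym C)) ga :
  nsym_coef (flatten xs) ga = \sum_(x <- xs) nsym_coef x ga.
Proof. by rewrite /nsym_coef big_flatten. Qed.

Lemma coef_scale c x ga : nsym_coef (nsym_scale c x) ga = c * nsym_coef x ga.
Proof. by rewrite /nsym_coef /nsym_scale big_map mulr_sumr. Qed.

Lemma coef_omega x ga :
  nsym_coef (omega x) ga = \sum_(p <- x) p.1 * nsym_coef (LamC C (rev p.2)) ga.
Proof. by rewrite /omega coef_flatten big_map; apply: eq_bigr => p _; apply: coef_scale. Qed.

Lemma coef_map_uniq (s : seq (seq nat)) (f : seq nat -> C) ga : uniq s ->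
  nsym_coef [seq (f be, be) | be <- s] ga = if ga \in s then f ga else 0.
Proof.
move=> us; rewrite /nsym_coef big_map /=; case: ifP => [gs | /negbT gs].
  by rewrite -big_filter filter_pred1_uniq // big_seq1.
by rewrite big1_seq // => be /andP[/eqP -> /(negP gs)].
Qed.

Lemma coef_one ga : nsym_coef (nsym_one C) ga = (ga == [::])%:R.
Proof. by rewrite /nsym_coef big_cons big_nil eq_sym; case: eqP; rewrite ?addr0. Qed.

Lemma sum_take_drop (p q ga : seq nat) (u v : C) :
  \sum_(i < (size ga).+1)
    (if p == take i ga then u else 0) * (if q == drop i ga then v else 0) =
  if p ++ q == ga then u * v else 0.
Proof.
case: eqP => [<- | pq]; last first.
  rewrite big1 // => i _; case: eqP => [ep|]; case: eqP => [eq|]; rewrite ?mulr0 ?mul0r //.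
  by case: pq; rewrite ep eq cat_take_drop.
have ip : (size p < (size (p ++ q)).+1)%N by rewrite size_cat ltnS leq_addr.
rewrite (bigD1 (Ordinal ip)) //= take_size_cat // drop_size_cat // !eqxx big1 ?addr0 //.
move=> [j jlt] /eqP nj; case: eqP => [e|]; rewrite ?mul0r //; case: nj; apply/val_inj => /=.
have := f_equal size e; have := jlt; rewrite /= size_take size_cat ltnS; case: ltnP; lia.
Qed.

Lemma coef_mul x y ga : nsym_coef (nsym_mul x y) ga =
  \sum_(i < (size ga).+1) nsym_coef x (take i ga) * nsym_coef y (drop i ga).
Proof.
rewrite /nsym_mul /nsym_coef big_mkcond big_allpairs_dep /=.
have split_prod i : (\sum_(p <- x | p.2 == take i ga) p.1) * (\sum_(q <- y | q.2 == drop i ga) q.1) =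
    \sum_(p <- x) \sum_(q <- y)
      (if p.2 == take i ga then p.1 else 0) * (if q.2 == drop i ga then q.1 else 0).
  by rewrite big_mkcond big_distrl; apply: eq_bigr => p _; rewrite big_mkcond big_distrr.
under [RHS]eq_bigr do rewrite split_prod.
rewrite [RHS]exchange_big; apply: eq_bigr => p _.
by rewrite [RHS]exchange_big; apply: eq_bigr => q _; rewrite sum_take_drop.
Qed.

Lemma coef_Bhat (a b : C) al ga : all_pos al ->
  nsym_coef (Bhat a b al) ga =
  if finer ga al then a ^+ (sumn al - size ga) * b ^+ (size ga - size al) else 0.
Proof.
move=> pal; rewrite /Bhat coef_map_uniq ?(filter_uniq _ (uniq_comps _)) //.
by rewrite mem_filter andbC mem_comps_refines.
Qed.

Lemma coef_Lam k ga : (0 < k)%N ->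
  nsym_coef (Lam C k) ga = if finer ga [:: k] then (-1) ^+ (k - size ga) else 0.
Proof.
move=> k0; have pk : all_pos [:: k] by rewrite /= k0.
have refines_k : refines ga [:: k] by [].
rewrite /Lam coef_map_uniq ?uniq_comps // -(mem_comps_refines ga pk) refines_k andbT.
by rewrite /= addn0.
Qed.

Lemma coef_Lam_head_lt k g t : (0 < g < k)%N ->
  nsym_coef (Lam C k) (g :: t) = (-1) ^+ g.-1 * nsym_coef (Lam C (k - g)) t.
Proof.
case/andP=> g0 gk; rewrite !coef_Lam ?subn_gt0 ?(ltn_trans g0 gk) //.
rewrite finer_cons g0 (ltn_eqF gk) gk /=; case: ifP => [/finer_size /= st | _].
  by rewrite -exprD; congr (_ ^+ _); lia.
by rewrite mulr0.
Qed.

Lemma coef_Lam_head_eq k t : (0 < k)%N ->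
  nsym_coef (Lam C k) (k :: t) = (t == [::])%:R * (-1) ^+ k.-1.
Proof.
move=> k0; rewrite coef_Lam // finer_cons k0 eqxx finers0.
by case: eqP => [-> | _]; rewrite ?mul1r ?mul0r // subn1.
Qed.

Lemma coef_Lam_head_out k g t : (0 < k)%N -> ~~ (0 < g <= k)%N ->
  nsym_coef (Lam C k) (g :: t) = 0.
Proof.
move=> k0 gk; rewrite coef_Lam // finer_cons.
by case: (posnP g) gk => //= g0; rewrite -ltnNge => kg; rewrite gtn_eqF // ltnNge ltnW.
Qed.

Lemma LamC_cons k de : LamC C (k :: de) = nsym_mul (Lam C k) (LamC C de).
Proof. by []. Qed.

Lemma coef_LamC de ga : all_pos de ->
  nsym_coef (LamC C de) ga = if finer ga de then (-1) ^+ (sumn de - size ga) else 0.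
Proof.
elim: ga de => [|g ga IH] [|k de] pde.
- by rewrite coef_one.
- by rewrite coef_mul big_ord1 coef_Lam ?mul0r //; case/andP: pde.
- by rewrite coef_one finers0.
case/andP: pde => k0 pde; rewrite LamC_cons coef_mul big_ord_recl coef_Lam // mul0r add0r.
under eq_bigr => i _ do rewrite lift0 [take _ _]/= [drop _ _]/=.
rewrite finer_cons; case: (posnP g) => [g0 | g0].
  by rewrite big1 // => i _; rewrite coef_Lam_head_out ?g0 ?mul0r.
case: ltngtP => gk /=.
- under eq_bigr => i _ do rewrite coef_Lam_head_lt ?g0 ?gk // -mulrA.
  rewrite -mulr_sumr -coef_mul -LamC_cons IH /= ?subn_gt0 ?gk //.
  case: ifP => [/finer_size /andP[_ /= sz] | _]; last by rewrite mulr0.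
  by rewrite -exprD; congr (_ ^+ _); lia.
- by rewrite big1 // => i _; rewrite coef_Lam_head_out ?mul0r // g0 -ltnNge.
subst g; under eq_bigr => i _ do rewrite coef_Lam_head_eq // -mulrA.
rewrite big_ord_recl big1 ?addr0 => [|i _]; last first.
  by case: ga {IH} i => [[] //|h ga i]; rewrite mul0r.
rewrite take0 drop0 eqxx mul1r IH //.
case: ifP => [/finer_size /andP[_ /= sz] | _]; last by rewrite mulr0.
by rewrite -exprD; congr (_ ^+ _); lia.
Qed.

End Coefficients.

Section IntervalSum.
Variables (C : comNzRingType) (a b : C).

Definition interval_sum (de al : seq nat) : C :=
  \sum_(be <- comps (sumn al) | finer de be && finer be al)
    a ^+ (sumn al - size be) * b ^+ (size be - size al).

Lemma interval_sum_eq0 de al : ~~ finer de al -> interval_sum de al = 0.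
Proof.
move=> /negP dal; rewrite /interval_sum big1 // => be /andP[deb beal].
by case: dal; apply: finer_trans deb beal.
Qed.

Lemma interval_sum_nil : interval_sum [::] [::] = 1.
Proof. by rewrite /interval_sum big_cons big_nil /= mulr1 addr0. Qed.

Lemma interval_sum_head_eq d de al : (0 < d)%N ->
  interval_sum (d :: de) (d :: al) = a ^+ d.-1 * interval_sum de al.
Proof.
move=> d0; rewrite /interval_sum big_mkcond (sum_comps_lead _ (d := d)) /=; last first.
- by move=> j be jd; rewrite finer_cons (gtn_eqF jd) (ltnNge d j) (ltnW jd) andbF.
- by rewrite d0 leq_addr.
rewrite addKn mulr_sumr [RHS]big_mkcond big_seq [RHS]big_seq; apply: eq_bigr => be.
rewrite mem_comps => /andP[pbe /eqP sbe] /=.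
rewrite !finer_cons d0 eqxx /= [X in _ + X](_ : _ = 0) ?addr0; last first.
  case: be pbe {sbe} => // j ce /andP[j0 _].
  rewrite [finer _ (d :: al)]finer_cons.
  have [-> ->] : ((d + j == d) = false /\ (d + j < d) = false)%N by split; lia.
  by rewrite /= !andbF.
case: ifP => // /andP[_ /finer_size /andP[_ sz]].
rewrite mulrA -exprD subSS; congr (_ ^+ _ * _); lia.
Qed.

Lemma interval_sum_head_lt d k de al : (0 < d < k)%N ->
  interval_sum (d :: de) (k :: al) = a ^+ d.-1 * (a + b) * interval_sum de ((k - d)%N :: al).
Proof.
case/andP=> d0 dk; rewrite /interval_sum big_mkcond (sum_comps_lead _ (d := d)) /=; last first.
- by move=> j be jd; rewrite finer_cons (gtn_eqF jd) (ltnNge d j) (ltnW jd) andbF.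
- by rewrite d0 (leq_trans (ltnW dk)) ?leq_addr.
rewrite (_ : k + sumn al - d = k - d + sumn al)%N; last lia.
rewrite mulr_sumr [RHS]big_mkcond big_seq [RHS]big_seq; apply: eq_bigr => be.
rewrite mem_comps => /andP[pbe /eqP sbe] /=.
rewrite [finer (d :: de) _]finer_cons [finer (d :: be) _]finer_cons d0 eqxx (ltn_eqF dk) dk /=.
case: be pbe sbe => [|j ce] pbe sbe; first by rewrite finer0s andbF addr0.
move: pbe => /= /andP[j0 _].
rewrite finer_head_shift // [finer (d :: de) _]finer_cons d0 addKn.
have [-> ->] : ((d == d + j) = false /\ d < d + j)%N by split; lia.
case: ifP => [/andP[_ /finer_size /andP[/= sz1 sz2]] | _] /=; last by rewrite addr0.
have dd := prednK d0.
set sc := size ce in sz1 sz2 *.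
have -> : (k + sumn al - sc.+2 = d.-1 + (k - d + sumn al - sc.+1))%N by lia.
have -> : (k + sumn al - sc.+1 = (d.-1 + (k - d + sumn al - sc.+1)).+1)%N by lia.
have -> : (sc.+2 - (size al).+1 = (sc.+1 - (size al).+1).+1)%N by lia.
by rewrite !exprS !exprD; ring.
Qed.

Lemma interval_sumE de al : interval_sum de al =
  if finer de al then a ^+ (sumn al - size de) * (a + b) ^+ (size de - size al) else 0.
Proof.
case: (boolP (finer de al)) => [dal | /interval_sum_eq0 //].
elim: de al dal => [|d de IH] [|k al]; rewrite ?finer0s ?finers0 //.
  by rewrite interval_sum_nil mulr1.
rewrite finer_cons => /andP[d0]; have dd := prednK d0.
case: ltngtP => [dk dal | // | <- dal].
- rewrite interval_sum_head_lt ?d0 ?dk // IH //.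
  have /andP[/= sz1 sz2] := finer_size dal.
  have -> : (k + sumn al - (size de).+1 = d.-1 + (k - d + sumn al - size de))%N by lia.
  have -> : ((size de).+1 - (size al).+1 = (size de - (size al).+1).+1)%N by lia.
  by rewrite exprS exprD; ring.
- rewrite interval_sum_head_eq // IH //.
  have /andP[sz1 sz2] := finer_size dal.
  have -> : (d + sumn al - (size de).+1 = d.-1 + (sumn al - size de))%N by lia.
  by rewrite subSS exprD mulrA.
Qed.

Lemma coef_omega_Bhat al ga : all_pos al ->
  nsym_coef (omega (Bhat a b al)) ga = (-1) ^+ (sumn al - size ga) * interval_sum (rev ga) al.
Proof.
move=> pal; rewrite coef_omega /Bhat big_map big_filter /interval_sum mulr_sumr.
rewrite big_mkcond [RHS]big_mkcond big_seq [RHS]big_seq; apply: eq_bigr => be bn.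
rewrite -(mem_comps_refines be pal) bn /=; move: bn; rewrite mem_comps => /andP[pbe /eqP sbe].
rewrite coef_LamC ?all_rev // sumn_rev sbe -[finer ga _]finer_rev revK.
by case: (refines be al); case: (finer (rev ga) be); rewrite ?mulr0 // mulrC.
Qed.

End IntervalSum.

Theorem proposition4p12 (R : realType) (al : seq nat) (a b : R[i]) :
  all (fun k => (0 < k)%N) al ->
  nsym_eq (omega (Bhat a b al)) (Bhat (- a) (a + b) (rev al)).
Proof.
move=> pal ga; rewrite coef_omega_Bhat // interval_sumE coef_Bhat ?all_rev //.
rewrite -[finer ga _]finer_rev revK sumn_rev !size_rev.
by case: ifP => _; rewrite ?mulr0 // [(- a) ^+ _]exprNn mulrA.
Qed.
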